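(* On the point-like global monopole spacetime $(M,g)$, the Ricci tensor $S$ satisfies: (a) $(M,g)$ is not Einstein, i.e. there is no function $f$ with $S=f\,g$, and it is not quasi-Einstein, i.e. there is no function $a$ for which $S-a\,g$ has rank $1$ at every point; (b) $(M,g)$ is an Einstein manifold of degree $2$: $S^2=\frac{\alpha^2-1}{r^2}\,S$; (c) $(M,g)$ is $2$-quasi-Einstein: there is a function $a$ (namely $a=0$) such that $S-a\,g$ has rank $2$ at every point; (d) the Riemann curvature tensor decomposes as $R=\frac{r^2}{2(\alpha^2-1)}\,S\wedge S$.
   Context: Let $M=\{(t,r,\theta,\phi):t\in\mathbb R,\ r>0,\ 0<\theta<\pi,\ 0<\phi<2\pi\}$ with coordinates $x^1=t,x^2=r,x^3=\theta,x^4=\phi$, equipped with the Lorentzian metric (point-like global monopole metric) $g=-dt^2+\alpha^{-2}dr^2+r^2(d\theta^2+\sin^2\theta\,d\phi^2)$, where $\alpha$ is a constant with $0<\alpha<1$. Let $\Gamma^l_{ij}$ be the Christoffel symbols of the Levi-Civita connection $\nabla$. Curvature conventions: $R^l{}_{ijk}=\partial_j\Gamma^l_{ik}-\partial_k\Gamma^l_{ij}+\Gamma^l_{mj}\Gamma^m_{ik}-\Gamma^l_{mk}\Gamma^m_{ij}$ (components of the $(1,3)$ curvature tensor $\widetilde R$), $R_{hijk}=g_{hl}R^l{}_{ijk}$ (components of the $(0,4)$ Riemann tensor $R$), Ricci tensor $S_{ij}=g^{hk}R_{hijk}$, scalar curvature $\kappa=g^{ij}S_{ij}$. The tensor $S^2$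 is $S^2_{ij}=S_{ik}g^{kl}S_{lj}$. For symmetric $(0,2)$-tensors $A,B$ the Kulkarni–Nomizu product is $(A\wedge B)_{hijk}=A_{hk}B_{ij}+A_{ij}B_{hk}-A_{hj}B_{ik}-A_{ik}B_{hj}$. *)

From Stdlib Require Import Reals.
From Coquelicot Require Import Coquelicot.
From mathcomp Require Import all_boot all_algebra.
From mathcomp Require Import Rstruct.

Set Implicit Arguments.
Unset Strict Implicit.
Unset Printing Implicit Defensive.

Import GRing.Theory.
Local Open Scope ring_scope.

(* A point of the coordinate chart: x^1 = t, x^2 = r, x^3 = theta, x^4 = phi,
   indexed here by 0,1,2,3 : 'I_4. *)
Definition pt := 'I_4 -> R.

Definition it : 'I_4 := @Ordinal 4 0 isT.
Definition ir : 'I_4 := @Ordinal 4 1 isT.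
Definition ith : 'I_4 := @Ordinal 4 2 isT.
Definition iph : 'I_4 := @Ordinal 4 3 isT.

Definition inM (p : pt) : Prop :=
  (0 < p ir)%R /\ (0 < p ith < PI)%R /\ (0 < p iph < 2 * PI)%R.

Definition gmet (alpha : R) (p : pt) (i j : 'I_4) : R :=
  if i == j then
    match val i with
    | 0 => -1
    | 1 => 1 / (alpha ^+ 2)
    | 2 => p ir ^+ 2
    | _ => p ir ^+ 2 * sin (p ith) ^+ 2
    end
  else 0.

Definition gmat (alpha : R) (p : pt) : 'M[R]_4 := \matrix_(i, j) gmet alpha p i j.

Definition ginv (alpha : R) (p : pt) (i j : 'I_4) : R := invmx (gmat alpha p) i j.

Definition pd (F : pt -> R) (j : 'I_4) (p : pt) : R :=
  Derive (fun s => F (fun k => if k == j then s else p k)) (p j).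

Definition Gam (alpha : R) (p : pt) (l i k : 'I_4) : R :=
  2^-1 * \sum_(m < 4) ginv alpha p l m *
    (pd (fun q => gmet alpha q m k) i p + pd (fun q => gmet alpha q m i) k p
     - pd (fun q => gmet alpha q i k) m p).

Definition Riem13 (alpha : R) (p : pt) (l i j k : 'I_4) : R :=
  pd (fun q => Gam alpha q l i k) j p - pd (fun q => Gam alpha q l i j) k p
  + \sum_(m < 4) Gam alpha p l m j * Gam alpha p m i k
  - \sum_(m < 4) Gam alpha p l m k * Gam alpha p m i j.

Definition Riem (alpha : R) (p : pt) (h i j k : 'I_4) : R :=
  \sum_(l < 4) gmet alpha p h l * Riem13 alpha p l i j k.

Definition Ric (alpha : R) (p : pt) (i j : 'I_4) : R :=
  \sum_(h < 4) \sum_(k < 4) ginv alpha p h k * Riem alpha p h i j k.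

Definition Ricmat (alpha : R) (p : pt) : 'M[R]_4 := \matrix_(i, j) Ric alpha p i j.

Definition Ric2 (alpha : R) (p : pt) (i j : 'I_4) : R :=
  \sum_(k < 4) \sum_(l < 4) Ric alpha p i k * ginv alpha p k l * Ric alpha p l j.

Definition KN (A B : 'I_4 -> 'I_4 -> R) (h i j k : 'I_4) : R :=
  A h k * B i j + A i j * B h k - A h j * B i k - A i k * B h j.

(* On the chart every metric quantity depends only on r and theta and the
   metric is diagonal, so the Christoffel symbols and the curvature can be
   computed in closed form.  The Ricci tensor is
   S = (alpha^2 - 1) (dtheta^2 + sin^2 theta dphi^2), i.e. (alpha^2 - 1)/r^2
   times the angular part of g.  Hence S has rank 2, and contracting it with
   g^-1, which is r^-2 on the angular plane, gives S^2 = (alpha^2 - 1)/r^2 S.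
   The only independent curvature component is
   R_{theta phi theta phi} = (1 - alpha^2) r^2 sin^2 theta, which is exactly
   what r^2/(2(alpha^2 - 1)) S /\ S produces.  S_tt = 0 while g_tt = -1 rules
   out S = f g; in S - a g the (theta, phi) block is invertible when a = 0 and
   the (t, r) block when a <> 0, so its rank is never 1. *)
From Stdlib Require Import Reals.
From Coquelicot Require Import Coquelicot.
From mathcomp Require Import all_boot all_algebra.
From mathcomp Require Import order Rstruct ring lra.
Import GRing.Theory Num.Theory Order.TTheory.
Local Open Scope ring_scope.

Lemma ord4_cases (j : 'I_4) : j = it \/ j = ir \/ j = ith \/ j = iph.
Proof.
case: j => [[|[|[|[|j]]]] Hj] //.
- by left; apply: val_inj.
- by right; left; apply: val_inj.
- by right; right; left; apply: val_inj.
- by right; right; right; apply: val_inj.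
Qed.

Lemma sum4 (F : 'I_4 -> R) : \sum_(k < 4) F k = F it + F ir + F ith + F iph.
Proof.
rewrite !big_ord_recl big_ord0 addr0 !addrA.
by congr (_ + _ + _ + _); congr F; apply: val_inj.
Qed.

Lemma R1E : R1 = 1. Proof. by []. Qed.
Lemma R0E : R0 = 0. Proof. by []. Qed.
Lemma IZR0E : IZR 0 = 0. Proof. by []. Qed.
Lemma IZR1E : IZR 1 = 1. Proof. by []. Qed.
Lemma IZR2E : IZR 2 = 2. Proof. by rewrite -R1E /IZR /IPR /IPR_2 RplusE R1E. Qed.
Lemma IZRN1E : IZR (Zneg 1) = -1. Proof. by rewrite /IZR /IPR RoppE R1E. Qed.

(* [auto_derive] only understands the Stdlib operations, [field] the MathComp
   ones: these two tactics translate back and forth. *)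
Ltac to_Rops := rewrite /GRing.exp /= /GRing.mul /GRing.add /GRing.inv /GRing.opp /=.
Ltac of_Rops :=
  rewrite ?RmultE ?RplusE ?RoppE ?RinvE ?RminusE ?RdivE
          ?R1E ?R0E ?IZR0E ?IZR1E ?IZR2E ?IZRN1E.

Lemma Rlt0_neq0 (x : R) : Rlt 0 x -> x != 0.
Proof. by move/RltP/lt0r_neq0. Qed.

Lemma sin_neq0 (x : R) : Rlt 0 x -> Rlt x PI -> sin x != 0.
Proof. by move=> h1 h2; apply: Rlt0_neq0; apply: sin_gt_0. Qed.

Lemma sqr_sub1_neq0 (a : R) : 0 < a -> a < 1 -> a ^+ 2 - 1 != 0.
Proof. by move=> h0 h1; rewrite subr_eq0 lt_eqF // expr2; nra. Qed.

Lemma pd_ext (F G : pt -> R) j p : (forall q, F q = G q) -> pd F j p = pd G j p.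
Proof. by move=> h; rewrite /pd; apply: Derive_ext => s; apply: h. Qed.

Lemma pd_rtheta (H : R -> R -> R) (p : pt) (j : 'I_4) dR dT :
  is_derive (fun s => H s (p ith)) (p ir) dR ->
  is_derive (fun s => H (p ir) s) (p ith) dT ->
  pd (fun q => H (q ir) (q ith)) j p =
  if (val j == 1)%N then dR else if (val j == 2)%N then dT else 0.
Proof.
move=> hR hT; rewrite /pd.
case: (ord4_cases j) => [->|[->|[->|->]]] /=.
- by rewrite Derive_const.
- exact: is_derive_unique.
- exact: is_derive_unique.
- by rewrite Derive_const.
Qed.

(* The open set of the chart on which the curvature computation is valid. *)
Definition on_chart (p : pt) : Prop := Rlt 0 (p ir) /\ Rlt 0 (p ith) /\ Rlt (p ith) PI.

Lemma inM_on_chart (p : pt) : inM p -> on_chart p.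
Proof. by case=> /RltP h1 [/andP[/RltP h2 /RltP h3] _]. Qed.

Lemma on_chart_r_neq0 p : on_chart p -> p ir != 0.
Proof. by case=> h _; apply: Rlt0_neq0. Qed.

Lemma on_chart_sin_neq0 p : on_chart p -> sin (p ith) != 0.
Proof. by case=> _ [h1 h2]; apply: sin_neq0. Qed.

Lemma pd_on_chart (F : pt -> R) (H : R -> R -> R) (p : pt) (j : 'I_4) dR dT :
  (forall q, on_chart q -> F q = H (q ir) (q ith)) -> on_chart p ->
  is_derive (fun s => H s (p ith)) (p ir) dR ->
  is_derive (fun s => H (p ir) s) (p ith) dT ->
  pd F j p = if (val j == 1)%N then dR else if (val j == 2)%N then dT else 0.
Proof.
move=> hFH hp hR hT; rewrite -(pd_rtheta H p j _ _ hR hT) /pd.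
apply: Derive_ext_loc; have [hr [ht0 htpi]] := hp.
case: (ord4_cases j) => [->|[->|[->|->]]] /=.
- by apply: filter_forall => s; apply: hFH.
- apply: filter_imp (open_gt 0 _ hr) => s hs; apply: hFH.
  by split=> //=; split.
- apply: filter_imp (open_and _ _ (open_gt 0) (open_lt PI) _ (conj ht0 htpi)).
  by move=> s hs; apply: hFH; split.
- by apply: filter_forall => s; apply: hFH.
Qed.

Section MetricTables.
Variable a : R.

Definition gdiag (r th : R) (m : nat) : R :=
  match m with
  | 0 => -1
  | 1 => 1 / (a ^+ 2)
  | 2 => r ^+ 2
  | _ => r ^+ 2 * sin th ^+ 2
  end.

Definition gdiag_inv (r th : R) (m : nat) : R :=
  match m with
  | 0 => -1
  | 1 => a ^+ 2
  | 2 => (r ^+ 2)^-1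
  | _ => (r ^+ 2 * sin th ^+ 2)^-1
  end.

End MetricTables.

(* [gdiag_d r th m j] is d_j g_mm, for j = 1 (r) and j = 2 (theta). *)
Definition gdiag_d (r th : R) (m j : nat) : R :=
  match j with
  | 1 => match m with 0 | 1 => 0 | 2 => 2 * r | _ => 2 * r * sin th ^+ 2 end
  | 2 => match m with 0 | 1 | 2 => 0 | _ => r ^+ 2 * (2 * sin th * cos th) end
  | _ => 0
  end.

Lemma is_derive_gdiag_r a r th m :
  is_derive (fun s => gdiag a s th m) r (gdiag_d r th m 1).
Proof.
case: m => [|[|[|m]]] /=; to_Rops; try apply: is_derive_const;
  auto_derive => //; of_Rops; ring.
Qed.

Lemma is_derive_gdiag_theta a r th m :
  is_derive (fun s => gdiag a r s m) th (gdiag_d r th m 2).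
Proof.
case: m => [|[|[|m]]] /=; to_Rops; try apply: is_derive_const;
  auto_derive => //; of_Rops; ring.
Qed.

Lemma gmetE a q m k :
  gmet a q m k = if (val m == val k)%N then gdiag a (q ir) (q ith) (val m) else 0.
Proof. by []. Qed.

Lemma pd_gmet a p m k j :
  pd (fun q => gmet a q m k) j p =
  if (val m == val k)%N then gdiag_d (p ir) (p ith) (val m) (val j) else 0.
Proof.
rewrite (pd_ext _ _ _ _ (fun q => gmetE a q m k)).
case: (val m == val k)%N; last by rewrite /pd Derive_const.
rewrite (pd_rtheta (fun r th => gdiag a r th (val m)) p j _ _
           (is_derive_gdiag_r _ _ _ _) (is_derive_gdiag_theta _ _ _ _)).
by case: (ord4_cases j) => [->|[->|[->|->]]].
Qed.

Lemma ginvE a p i j : a != 0 -> p ir != 0 -> sin (p ith) != 0 ->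
  ginv a p i j = if (val i == val j)%N then gdiag_inv a (p ir) (p ith) (val i) else 0.
Proof.
move=> ha hr hs.
pose G : 'M[R]_4 :=
  \matrix_(i, j) if (val i == val j)%N then gdiag_inv a (p ir) (p ith) (val i) else 0.
have gG : gmat a p *m G = 1%:M.
  apply/matrixP => u v; rewrite !mxE sum4 !mxE.
  case: (ord4_cases u) => [->|[->|[->|->]]]; case: (ord4_cases v) => [->|[->|[->|->]]];
    rewrite /gmet /= ?mxE /= ?IZRN1E; by field; rewrite ?ha ?hr ?hs.
have [gU _] := mulmx1_unit gG; rewrite /ginv.
have -> : invmx (gmat a p) = G.
  by rewrite -[RHS]mul1mx -(mulVmx gU) -mulmxA gG mulmx1.
by rewrite mxE.
Qed.

Section ChristoffelTables.
Variable a : R.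

(* [chr r th l i k] is Gamma^l_{ik}; [chr_dr] and [chr_dth] are its
   derivatives in r and theta. *)
Definition chr (r th : R) (l i k : nat) : R :=
  match l, i, k with
  | 1, 2, 2 => - (a ^+ 2) * r
  | 1, 3, 3 => - (a ^+ 2) * r * sin th ^+ 2
  | 2, 1, 2 | 2, 2, 1 => r^-1
  | 2, 3, 3 => - (sin th * cos th)
  | 3, 1, 3 | 3, 3, 1 => r^-1
  | 3, 2, 3 | 3, 3, 2 => cos th / sin th
  | _, _, _ => 0
  end.

Definition chr_dr (r th : R) (l i k : nat) : R :=
  match l, i, k with
  | 1, 2, 2 => - (a ^+ 2)
  | 1, 3, 3 => - (a ^+ 2) * sin th ^+ 2
  | 2, 1, 2 | 2, 2, 1 | 3, 1, 3 | 3, 3, 1 => - (r * r)^-1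
  | _, _, _ => 0
  end.

Definition chr_dth (r th : R) (l i k : nat) : R :=
  match l, i, k with
  | 1, 3, 3 => - (a ^+ 2) * r * (2 * sin th * cos th)
  | 2, 3, 3 => - (cos th * cos th - sin th * sin th)
  | 3, 2, 3 | 3, 3, 2 => (- (sin th * sin th) - cos th * cos th) / (sin th * sin th)
  | _, _, _ => 0
  end.

Lemma is_derive_chr_r r th l i k : r != 0 ->
  is_derive (fun s => chr s th l i k) r (chr_dr r th l i k).
Proof.
move=> /eqP hr.
case: l => [|[|[|[|l]]]] /=; try apply: is_derive_const;
case: i => [|[|[|[|i]]]] /=; try apply: is_derive_const;
case: k => [|[|[|[|k]]]] /=; try apply: is_derive_const;
to_Rops; auto_derive; rewrite ?R0E; try tauto; of_Rops; field; exact/eqP.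
Qed.

Lemma is_derive_chr_theta r th l i k : sin th != 0 ->
  is_derive (fun s => chr r s l i k) th (chr_dth r th l i k).
Proof.
move=> /eqP hs.
case: l => [|[|[|[|l]]]] /=; try apply: is_derive_const;
case: i => [|[|[|[|i]]]] /=; try apply: is_derive_const;
case: k => [|[|[|[|k]]]] /=; try apply: is_derive_const;
to_Rops; auto_derive; rewrite ?R0E; try tauto; of_Rops; field; exact/eqP.
Qed.

End ChristoffelTables.

Lemma GamE a p l i k : a != 0 -> p ir != 0 -> sin (p ith) != 0 ->
  Gam a p l i k = chr a (p ir) (p ith) (val l) (val i) (val k).
Proof.
move=> ha hr hs; rewrite /Gam.
under eq_bigr => m _ do rewrite ginvE // !pd_gmet.
rewrite sum4.
case: (ord4_cases l) => [->|[->|[->|->]]];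
case: (ord4_cases i) => [->|[->|[->|->]]];
case: (ord4_cases k) => [->|[->|[->|->]]] => /=;
of_Rops; by field; rewrite ?ha ?hr ?hs.
Qed.

Lemma pd_Gam a p l i k j : a != 0 -> on_chart p ->
  pd (fun q => Gam a q l i k) j p =
  if (val j == 1)%N then chr_dr a (p ir) (p ith) (val l) (val i) (val k)
  else if (val j == 2)%N then chr_dth a (p ir) (p ith) (val l) (val i) (val k)
  else 0.
Proof.
move=> ha hp.
apply: (pd_on_chart _ (fun r th => chr a r th (val l) (val i) (val k))) => //.
- move=> q hq.
  by rewrite GamE // ?on_chart_r_neq0 ?on_chart_sin_neq0.
- exact/is_derive_chr_r/on_chart_r_neq0.
- exact/is_derive_chr_theta/on_chart_sin_neq0.
Qed.

Section CurvatureTables.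
Variable a : R.

Definition chr_d (r th : R) (j l i k : nat) : R :=
  if (j == 1)%N then chr_dr a r th l i k
  else if (j == 2)%N then chr_dth a r th l i k else 0.

Definition riem13 (r th : R) (l i j k : nat) : R :=
  chr_d r th j l i k - chr_d r th k l i j
  + (chr a r th l 0 j * chr a r th 0 i k + chr a r th l 1 j * chr a r th 1 i k
     + chr a r th l 2 j * chr a r th 2 i k + chr a r th l 3 j * chr a r th 3 i k)
  - (chr a r th l 0 k * chr a r th 0 i j + chr a r th l 1 k * chr a r th 1 i j
     + chr a r th l 2 k * chr a r th 2 i j + chr a r th l 3 k * chr a r th 3 i j).

Definition ric (th : R) (i j : nat) : R :=
  if (i == j)%N then
    match i with 0 | 1 => 0 | 2 => a ^+ 2 - 1 | _ => (a ^+ 2 - 1) * sin th ^+ 2 end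
  else 0.

Lemma lower_riem13_KN r th (h i j k : 'I_4) :
  a != 0 -> r != 0 -> sin th != 0 -> a ^+ 2 - 1 != 0 ->
  gdiag a r th h * riem13 r th h i j k
  = r ^+ 2 / (2 * (a ^+ 2 - 1))
    * KN (fun u v => ric th u v) (fun u v => ric th u v) h i j k.
Proof.
move=> ha hr hs ha1.
case: h => [[|[|[|[|h]]]] ?] //; case: i => [[|[|[|[|i]]]] ?] //;
case: j => [[|[|[|[|j]]]] ?] //; case: k => [[|[|[|[|k]]]] ?] //;
rewrite /riem13 /chr_d /ric /KN /=; of_Rops; by field; rewrite ?ha ?hr ?hs ?ha1.
Qed.

End CurvatureTables.

Section RankTwo.
Variables (F : fieldType) (n : nat).

Lemma rank_ge2_diag_minor (A : 'M[F]_n) (u v : 'I_n) : u != v ->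
  A u v = 0 -> A v u = 0 -> A u u != 0 -> A v v != 0 -> (2 <= \rank A)%N.
Proof.
move=> uv Auv Avu Auu Avv.
pose f (i : 'I_2) : 'I_n := if i == ord0 then u else v.
pose D : 'M[F]_2 := \matrix_(i, j) if i == j then (A (f i) (f i))^-1 else 0.
have minor_unit : mxsub f f A \in unitmx.
  have [] // := @mulmx1_unit _ _ (mxsub f f A) D.
  apply/matrixP => i j; rewrite !mxE !big_ord_recl big_ord0 !mxE.
  case: i => [[|[|i]] ?] //; case: j => [[|[|j]] ?] //; rewrite /f /= ?Auv ?Avu;
    by rewrite ?mulr0 ?mul0r ?addr0 ?add0r ?mulfV.
rewrite -(mxrank_unit minor_unit).
have -> : mxsub f f A = rowsub f 1%:M *m A *m colsub f 1%:M.
  by rewrite mulmx_colsub mulmx1 -rowsubE; apply/matrixP => i j; rewrite !mxE.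
exact: leq_trans (mxrankM_maxl _ _) (mxrankM_maxr _ _).
Qed.

Lemma rank_le2_rows (A : 'M[F]_n) (u v : 'I_n) : u != v ->
  (forall i j, i != u -> i != v -> A i j = 0) -> (\rank A <= 2)%N.
Proof.
move=> uv A0.
pose f (i : 'I_2) : 'I_n := if i == ord0 then u else v.
have -> : A = (rowsub f 1%:M)^T *m rowsub f A.
  apply/matrixP => i j; rewrite !mxE !big_ord_recl big_ord0 !mxE /f /=.
  have [<-|iu] := eqVneq u i; first by rewrite eq_sym (negbTE uv) mul1r mul0r !addr0.
  have [<-|iv] := eqVneq v i; first by rewrite mul1r mul0r add0r addr0.
  by rewrite !mul0r !addr0 A0 // eq_sym.
exact: leq_trans (mxrankM_maxr _ _) (rank_leq_row _).
Qed.

End RankTwo.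

Section Curvature.
Variables (a : R) (p : pt).
Hypotheses (a_gt0 : 0 < a) (a_lt1 : a < 1) (p_chart : on_chart p).

Let a_neq0 : a != 0 := lt0r_neq0 a_gt0.
Let r_neq0 : p ir != 0 := on_chart_r_neq0 _ p_chart.
Let sin_theta_neq0 : sin (p ith) != 0 := on_chart_sin_neq0 _ p_chart.
Let a2_neq1 : a ^+ 2 - 1 != 0 := sqr_sub1_neq0 a a_gt0 a_lt1.

Lemma Riem13E l i j k :
  Riem13 a p l i j k = riem13 a (p ir) (p ith) (val l) (val i) (val j) (val k).
Proof. by rewrite /Riem13 !pd_Gam // !sum4 !GamE. Qed.

Lemma RiemE h i j k :
  Riem a p h i j k
  = p ir ^+ 2 / (2 * (a ^+ 2 - 1))
    * KN (fun u v => ric a (p ith) u v) (fun u v => ric a (p ith) u v) h i j k.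
Proof.
rewrite -lower_riem13_KN // /Riem sum4 !Riem13E.
by case: (ord4_cases h) => [->|[->|[->|->]]] /=; rewrite /gmet /=; of_Rops; ring.
Qed.

Lemma RicE i j : Ric a p i j = ric a (p ith) i j.
Proof.
rewrite /Ric.
under eq_bigr => h _ do under eq_bigr => k _ do rewrite ginvE // RiemE.
rewrite !sum4.
case: (ord4_cases i) => [->|[->|[->|->]]]; case: (ord4_cases j) => [->|[->|[->|->]]];
  rewrite /KN /ric /=; of_Rops; by field; rewrite ?a_neq0 ?r_neq0 ?sin_theta_neq0 ?a2_neq1.
Qed.

Lemma Ric2E i j : Ric2 a p i j = (a ^+ 2 - 1) / (p ir ^+ 2) * Ric a p i j.
Proof.
rewrite /Ric2.
under eq_bigr => h _ do under eq_bigr => k _ do rewrite ginvE // !RicE.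
rewrite !sum4 RicE.
case: (ord4_cases i) => [->|[->|[->|->]]]; case: (ord4_cases j) => [->|[->|[->|->]]];
  rewrite /ric /=; of_Rops; by field; rewrite ?a_neq0 ?r_neq0 ?sin_theta_neq0 ?a2_neq1.
Qed.

Lemma Riem_KN_Ric h i j k :
  Riem a p h i j k
  = p ir ^+ 2 / (2 * (a ^+ 2 - 1)) * KN (Ric a p) (Ric a p) h i j k.
Proof. by rewrite RiemE /KN !RicE. Qed.

Lemma Ric_sub_scale_gmatE c i j :
  (Ricmat a p - c *: gmat a p) i j = ric a (p ith) i j - c * gmet a p i j.
Proof. by rewrite !mxE RicE. Qed.

Lemma Ric_neq_scale_gmet c : ~ (forall i j, Ric a p i j = c * gmet a p i j).
Proof.
move=> hc; have := hc it it; have := hc ith ith.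
rewrite !RicE /ric /gmet /= ?IZRN1E mulrN1 => h2 /esym /eqP; rewrite oppr_eq0 => /eqP c0.
by move: a2_neq1; rewrite h2 c0 mul0r eqxx.
Qed.

Lemma rank_Ric_sub_scale_ge2 c : (2 <= \rank (Ricmat a p - c *: gmat a p)%R)%N.
Proof.
have [->|c_neq0] := eqVneq c 0.
  apply: (@rank_ge2_diag_minor _ _ _ ith iph) => //;
    rewrite Ric_sub_scale_gmatE mul0r subr0 //=.
  by rewrite mulf_neq0 // expf_neq0.
apply: (@rank_ge2_diag_minor _ _ _ it ir) => //;
  rewrite Ric_sub_scale_gmatE /ric /gmet /= ?IZRN1E ?mulr0 ?subr0 //.
- by rewrite mulrN1 sub0r opprK.
- by rewrite sub0r oppr_eq0 mulf_neq0 // div1r invr_neq0 // expf_neq0.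
Qed.

Lemma rank_Ricmat : \rank (Ricmat a p) = 2%N.
Proof.
apply/eqP; rewrite eqn_leq; apply/andP; split.
  apply: (@rank_le2_rows _ _ _ ith iph) => // i j hi2 hi3.
  rewrite mxE RicE /ric.
  by case: (ord4_cases i) hi2 hi3 => [->|[->|[->|->]]] //= _ _; case: ifP.
by have := rank_Ric_sub_scale_ge2 0; rewrite scale0r subr0.
Qed.

End Curvature.

Definition pt_ones : pt := fun _ => 1.

Lemma inM_pt_ones : inM pt_ones.
Proof.
have /RltP one_lt_pi := Rlt_trans _ _ _ PI2_1 PI2_Rlt_PI.
split; first exact: ltr01.
split; apply/andP; split; rewrite ?IZR2E //.
by rewrite (lt_trans one_lt_pi) // mulr_natl mulr2n ltrDr (lt_trans ltr01).
Qed.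

Theorem proposition3p1 (alpha : R) (Ha : 0 < alpha) (Ha1 : alpha < 1) :
  (* (a) not Einstein *)
  (~ exists f : pt -> R, forall p : pt, inM p ->
       forall i j : 'I_4, Ric alpha p i j = f p * gmet alpha p i j)
  (* (a) not quasi-Einstein *)
  /\ (~ exists a : pt -> R, forall p : pt, inM p ->
       \rank (Ricmat alpha p - a p *: gmat alpha p) = 1%N)
  (* (b) Einstein of degree 2 *)
  /\ (forall p : pt, inM p -> forall i j : 'I_4,
       Ric2 alpha p i j = (alpha ^+ 2 - 1) / (p ir ^+ 2) * Ric alpha p i j)
  (* (c) 2-quasi-Einstein, with a = 0 *)
  /\ (exists a : pt -> R, (forall p : pt, a p = 0) /\ forall p : pt, inM p ->
       \rank (Ricmat alpha p - a p *: gmat alpha p) = 2%N)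
  (* (d) R = r^2 / (2 (alpha^2 - 1)) S /\ S *)
  /\ (forall p : pt, inM p -> forall h i j k : 'I_4,
       Riem alpha p h i j k
       = p ir ^+ 2 / (2 * (alpha ^+ 2 - 1)) * KN (Ric alpha p) (Ric alpha p) h i j k).
Proof.
have ones_chart := inM_on_chart _ inM_pt_ones.
split.
  case=> f hf.
  exact: (Ric_neq_scale_gmet _ _ Ha Ha1 ones_chart _ (hf _ inM_pt_ones)).
split.
  case=> c hc.
  have := rank_Ric_sub_scale_ge2 _ _ Ha Ha1 ones_chart (c pt_ones).
  by rewrite (hc _ inM_pt_ones).
split.
  by move=> p /inM_on_chart hp i j; apply: Ric2E.
split.
  exists (fun=> 0); split=> // p /inM_on_chart hp.
  by rewrite scale0r subr0; apply: rank_Ricmat.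
by move=> p /inM_on_chart hp h i j k; apply: Riem_KN_Ric.
Qed.
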